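(* Let $m$, $c$, $d$ be positive integers with $m-2c-1>0$. Let $\mathbf{w}_{c+1},\dots,\mathbf{w}_m\in\mathbb{R}^d$ (the benign local models), let $\mathbf{w}_{Re}\in\mathbb{R}^d$, and let $\mathbf{s}\in\{-1,1\}^d$. Consider the optimization problem over $\lambda>0$: $$\max_{\lambda}\ \lambda \quad\text{subject to}\quad \mathbf{w}_1'=\mathrm{Krum}(\mathbf{w}_1',\dots,\mathbf{w}_c',\mathbf{w}_{c+1},\dots,\mathbf{w}_m),\quad \mathbf{w}_1'=\mathbf{w}_{Re}-\lambda\mathbf{s},\quad \mathbf{w}_i'=\mathbf{w}_1' \text{ for } i=2,\dots,c,$$ where the first constraint means that Krum, applied to these $m$ vectors with parameter $c$, selects $\mathbf{w}_1'$. Suppose $\lambda$ is a solution to this optimization problem. Then $$\lambda\le\sqrt{\frac{1}{(m-2c-1)d}\cdot\min_{c+1\le i\le m}\sum_{l\in\tilde{\Gamma}_{\mathbf{w}_i}^{m-c-2}}D^2(\mathbf{w}_l,\mathbf{w}_i)}\;+\;\frac{1}{\sqrt{d}}\cdot\max_{c+1\le i\le m}D(\mathbf{w}_i,\mathbf{w}_{Re}),$$ where $D(\cdot,\cdot)$ is Euclidean distance and $\tilde{\Gamma}_{\mathbf{w}_i}^{m-c-2}$ is the set of (indices of) the $m-c-2$ benign local models among $\mathbf{w}_{c+1},\dots,\mathbf{w}_m$, other than $\mathbf{w}_i$ itself, that have the smallest Euclidean distance to $\mathbf{w}_i$.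
   Context: Krum aggregation rule with parameter $c$ (an assumed upper bound on the number of compromised devices): given $m$ local models $\mathbf{v}_1,\dots,\mathbf{v}_m\in\mathbb{R}^d$, for each $\mathbf{v}_i$ compute the $m-c-2$ local models among the others that are closest to $\mathbf{v}_i$ in Euclidean distance, and let the score of $\mathbf{v}_i$ be the sum of the squared Euclidean distances from $\mathbf{v}_i$ to these $m-c-2$ models. Krum outputs (selects) a local model with the smallest score. In the setting, $\mathbf{w}_1',\dots,\mathbf{w}_c'$ are the crafted local models of the $c$ compromised devices and $d$ is the number of model parameters. *)

From mathcomp Require Import all_boot all_order all_algebra.
From mathcomp Require Import reals.
Set Implicit Arguments. Unset Strict Implicit. Unset Printing Implicit Defensive.
Import Order.TTheory GRing.Theory Num.Theory.
Local Open Scope ring_scope.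

Section KrumDefs.
Variable R : realType.

Definition edist (d : nat) (x y : 'rV[R]_d) : R :=
  Num.sqrt (\sum_(k < d) (x 0 k - y 0 k) ^+ 2).

Definition sum_smallest (k : nat) (s : seq R) : R :=
  \sum_(x <- take k (sort (fun a b : R => a <= b) s)) x.

Definition seqmin (s : seq R) : R := \big[Num.min/head 0 s]_(x <- s) x.
Definition seqmax (s : seq R) : R := \big[Num.max/head 0 s]_(x <- s) x.

Definition krum_score (m c d : nat) (v : 'I_m -> 'rV[R]_d) (i : 'I_m) : R :=
  sum_smallest (m - c - 2)
    [seq edist (v i) (v j) ^+ 2 | j <- [seq j <- enum 'I_m | j != i]].

Definition krum_selects (m c d : nat) (v : 'I_m -> 'rV[R]_d) (i : 'I_m) : Prop :=
  forall j : 'I_m, krum_score c v i <= krum_score c v j.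

(* The m local models: indices 0..c-1 (paper: 1..c) are the crafted models
   w'_1 = ... = w'_c = wRe - lambda s; indices c..m-1 (paper: c+1..m) are the
   benign models w_i. The values of w at indices < c are irrelevant. *)
Definition attacked_models (m c d : nat) (w : 'I_m -> 'rV[R]_d)
  (wRe s : 'rV[R]_d) (lam : R) : 'I_m -> 'rV[R]_d :=
  fun i => if (i < c)%N then wRe - lam *: s else w i.

Definition krum_feasible (m c d : nat) (w : 'I_m -> 'rV[R]_d)
  (wRe s : 'rV[R]_d) (lam : R) : Prop :=
  0 < lam /\
  forall i1 : 'I_m, nat_of_ord i1 = 0%N ->
    krum_selects c (attacked_models c w wRe s lam) i1.

Definition krum_opt_solution (m c d : nat) (w : 'I_m -> 'rV[R]_d)
  (wRe s : 'rV[R]_d) (lam : R) : Prop :=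
  krum_feasible c w wRe s lam /\
  forall lam', krum_feasible c w wRe s lam' -> lam' <= lam.

Definition benign (m c : nat) : seq 'I_m := [seq i <- enum 'I_m | (c <= nat_of_ord i)%N].

Definition benign_nbr_sum (m c d : nat) (w : 'I_m -> 'rV[R]_d) (i : 'I_m) : R :=
  sum_smallest (m - c - 2)
    [seq edist (w l) (w i) ^+ 2 | l <- [seq l <- benign m c | l != i]].

End KrumDefs.

From mathcomp Require Import all_boot all_order all_algebra.
From mathcomp Require Import reals.
From mathcomp Require Import ring lra zify.
Import Order.TTheory GRing.Theory Num.Theory.
Set Implicit Arguments. Unset Strict Implicit. Unset Printing Implicit Defensive.
Local Open Scope ring_scope.

(* Krum selects the crafted model w'_1, so its score is at most the score of
   the benign model w_i minimising the benign-neighbour sum, and that score is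
   at most this sum, since the m-c-2 nearest models to w_i among all others are
   at least as close as its m-c-2 nearest benign ones.  Conversely, by the
   triangle inequality w'_1 = w_Re - lam s lies at distance at least
   t = lam sqrt d - max_j D(w_j, w_Re) from every benign w_j, and only the
   c-1 other crafted models (copies of w'_1) are closer, so at least m-2c-1 of
   the m-c-2 terms of its score are >= t^2.  Hence (m-2c-1) t^2 is bounded by
   the minimal benign-neighbour sum, which rearranges to the claim. *)

Section SumSmallest.
Variable R : realType.
Implicit Types (s u : seq R) (b : R).

Lemma sorted_sum_take_le s u : sorted <=%R s -> subseq u s ->
  \sum_(x <- take (size u) s) x <= \sum_(x <- u) x.
Proof.
elim: s u => [|x s IHs] [|y u] //= s_sorted; rewrite ?big_nil //.
have s'_sorted : sorted <=%R s := subseq_sorted le_trans (subseq_cons s x) s_sorted.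
rewrite !big_cons; case: eqP => [-> u_sub | _ u_sub]; first by rewrite lerD2l IHs.
have le_xy : x <= y.
  have /allP -> // := order_path_min le_trans s_sorted.
  by apply: (mem_subseq u_sub); rewrite mem_head.
by rewrite lerD // IHs // (subseq_trans (subseq_cons u y)).
Qed.

Lemma size_take_sort k s : (k <= size s)%N -> size (take k (sort <=%R s)) = k.
Proof. by move=> k_le; rewrite size_take size_sort; case: ltngtP k_le => //; lia. Qed.

Lemma sum_smallest_subseq k s u : subseq u s -> (k <= size u)%N ->
  sum_smallest k s <= sum_smallest k u.
Proof.
move=> u_sub k_le; rewrite /sum_smallest.
have sub_sorted : subseq (take k (sort <=%R u)) (sort <=%R s).
  apply: subseq_trans (take_subseq _ _) _.
  by apply: subseq_sort u_sub; [exact: le_total | exact: (@le_trans _ R)].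
by have := sorted_sum_take_le (sort_sorted le_total s) sub_sorted; rewrite size_take_sort.
Qed.

Lemma count_mulr_le_sum b s : all (>= 0) s -> (count (>= b) s)%:R * b <= \sum_(x <- s) x.
Proof.
move=> /allP s_ge0; rewrite (bigID (>= b)) /= -[leLHS]addr0 mulr_natl.
apply: lerD; last by rewrite big_seq_cond sumr_ge0 // => x /andP[/s_ge0].
by rewrite -iter_addr_0 -big_const_seq ler_sum.
Qed.

Lemma sum_smallest_ge k a b s : 0 <= b -> all (>= 0) s ->
  (count (< b) s <= a)%N -> (k <= size s)%N -> (k - a)%:R * b <= sum_smallest k s.
Proof.
move=> b_ge0 s_ge0 count_lt k_le; rewrite /sum_smallest.
set u := take k (sort <=%R s).
have u_ge0 : all (>= 0) u by apply/allP=> x /mem_take; rewrite mem_sort => /(allP s_ge0).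
apply: le_trans (count_mulr_le_sum b u_ge0); rewrite ler_wpM2r // ler_nat.
have count_lt_u : (count (< b) u <= a)%N.
  apply: leq_trans count_lt; rewrite -[leqRHS](count_sort <=%R).
  exact: leq_count_subseq (take_subseq _ _).
suff : (count (>= b) u + count (< b) u)%N = k by lia.
rewrite -(size_take_sort k_le) -(count_predC (< b)) addnC; congr (_ + _)%N.
by apply: eq_count => x; rewrite /= leNgt.
Qed.

Lemma le_seqmax x s : x \in s -> x <= seqmax s.
Proof.
rewrite /seqmax; move: (head 0 s) => h; elim: s => [|y s IHs] //.
by rewrite inE big_cons le_max => /orP[/eqP-> | /IHs->]; rewrite ?lexx ?orbT.
Qed.

Lemma mem_seqmin s : s != [::] -> seqmin s \in s.
Proof.
rewrite /seqmin; case: s => [|h s] //= _.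
have mem_big t : \big[Num.min/h]_(y <- t) y \in h :: t.
  elim: t => [|y t IHt]; first by rewrite big_nil mem_head.
  rewrite big_cons; case: leP => _; first by rewrite !inE eqxx orbT.
  by move: IHt; rewrite !inE => /orP[->|->]; rewrite ?orbT.
by case/predU1P: (mem_big (h :: s)) => [->|]; rewrite ?mem_head.
Qed.

End SumSmallest.

Section SumOfSquares.
Variable n : nat.

Lemma cauchy_schwarz (R : realDomainType) (a b : 'I_n -> R) :
  (\sum_i a i * b i) ^+ 2 <= (\sum_i a i ^+ 2) * (\sum_i b i ^+ 2).
Proof.
have lagrange_identity : \sum_i \sum_j (a i * b j - a j * b i) ^+ 2 =
    ((\sum_i a i ^+ 2) * (\sum_i b i ^+ 2) - (\sum_i a i * b i) ^+ 2) *+ 2.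
  transitivity (\sum_i \sum_j (a i ^+ 2 * b j ^+ 2 + b i ^+ 2 * a j ^+ 2
                               - (a i * b i) * (a j * b j) *+ 2)).
    by apply: eq_bigr => i _; apply: eq_bigr => j _; ring.
  under eq_bigr => i _ do rewrite sumrB big_split sumrMnl -!mulr_sumr.
  by rewrite sumrB big_split sumrMnl -!mulr_suml /=; ring.
have : 0 <= \sum_i \sum_j (a i * b j - a j * b i) ^+ 2.
  by do 2!apply: sumr_ge0 => ? _; exact: sqr_ge0.
by rewrite lagrange_identity pmulrn_lge0 // subr_ge0.
Qed.

Lemma minkowski_sum_sqr (R : rcfType) (a b : 'I_n -> R) :
  Num.sqrt (\sum_i (a i + b i) ^+ 2) <=
  Num.sqrt (\sum_i a i ^+ 2) + Num.sqrt (\sum_i b i ^+ 2).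
Proof.
set A := \sum_i a i ^+ 2; set B := \sum_i b i ^+ 2; set S := \sum_i a i * b i.
have A_ge0 : 0 <= A by apply: sumr_ge0 => i _; exact: sqr_ge0.
have B_ge0 : 0 <= B by apply: sumr_ge0 => i _; exact: sqr_ge0.
have S_le : S <= Num.sqrt A * Num.sqrt B.
  rewrite -sqrtrM // (le_trans (ler_norm S)) // -sqrtr_sqr.
  exact/ler_wsqrtr/cauchy_schwarz.
have -> : \sum_i (a i + b i) ^+ 2 = A + S *+ 2 + B.
  rewrite /A /B /S -sumrMnl -!big_split /=; apply: eq_bigr => i _; ring.
rewrite -[leRHS]ger0_norm ?addr_ge0 ?sqrtr_ge0 // -sqrtr_sqr ler_wsqrtr //.
by rewrite sqrrD !sqr_sqrtr // lerD2r lerD2l lerMn2r.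
Qed.

End SumOfSquares.

Section EuclideanDistance.
Variables (R : realType) (d : nat).
Implicit Types x y z s : 'rV[R]_d.

Lemma edistC x y : edist x y = edist y x.
Proof. by rewrite /edist; congr Num.sqrt; apply: eq_bigr => k _; rewrite -sqrrN opprB. Qed.

Lemma edist_triangle x y z : edist x z <= edist x y + edist y z.
Proof.
rewrite /edist (eq_bigr (fun k => ((x 0 k - y 0 k) + (y 0 k - z 0 k)) ^+ 2)).
  exact: minkowski_sum_sqr.
by move=> k _; rewrite addrA subrK.
Qed.

Lemma edist_shift_sign x s (lam : R) : (forall k, s 0 k = 1 \/ s 0 k = -1) ->
  edist x (x - lam *: s) = `|lam| * Num.sqrt d%:R.
Proof.
move=> s_sign; rewrite /edist.
have -> : \sum_k (x 0 k - (x - lam *: s) 0 k) ^+ 2 = \sum_(k < d) lam ^+ 2.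
  by apply: eq_bigr => k _; rewrite !mxE; case: (s_sign k) => ->; ring.
by rewrite sumr_const card_ord -[_ *+ d]mulr_natr sqrtrM ?sqr_ge0 // sqrtr_sqr.
Qed.

Lemma edist_shift_ge x y s (lam : R) : (forall k, s 0 k = 1 \/ s 0 k = -1) ->
  `|lam| * Num.sqrt d%:R - edist y x <= edist (x - lam *: s) y.
Proof.
move=> s_sign; rewrite lerBlDr -(edist_shift_sign x lam s_sign).
apply: le_trans (edist_triangle x y _) _.
by rewrite addrC (edistC x y) lerD2r edistC.
Qed.

End EuclideanDistance.

Lemma count_enum_ord m (p : pred nat) :
  count (fun i : 'I_m => p i) (enum 'I_m) = count p (iota 0 m).
Proof. by rewrite -val_enum_ord count_map. Qed.

Lemma count_leq_iota c m : count (leq c) (iota 0 m) = (m - c)%N.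
Proof.
elim: m => // m IHm; rewrite -addn1 iotaD count_cat IHm /= addn0.
by case: leqP; lia.
Qed.

Section Indices.
Variables m c : nat.

Lemma size_benign : size (benign m c) = (m - c)%N.
Proof. by rewrite size_filter count_enum_ord count_leq_iota. Qed.

Lemma size_benign_nbrs (i : 'I_m) :
  (m - c - 1 <= size [seq l <- benign m c | l != i])%N.
Proof.
have count_split : (count (pred1 i) (benign m c) +
    count (fun l => l != i) (benign m c) = m - c)%N.
  by rewrite -size_benign; exact: count_predC.
have : (count (pred1 i) (benign m c) <= 1)%N.
  by rewrite count_uniq_mem ?leq_b1 // filter_uniq ?enum_uniq.
by rewrite size_filter; lia.
Qed.

Lemma benign_nbrs_subseq (i : 'I_m) :
  subseq [seq l <- benign m c | l != i] [seq j <- enum 'I_m | j != i].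
Proof.
rewrite subseq_filter (subseq_trans (filter_subseq _ _)) ?filter_subseq ?andbT //.
by apply/allP => j; rewrite mem_filter => /andP[].
Qed.

Lemma count_crafted_nbrs (i0 : 'I_m) : nat_of_ord i0 = 0%N ->
  (count (fun j : 'I_m => j < c)%N [seq j <- enum 'I_m | j != i0] <= c - 1)%N.
Proof.
move=> i0_0; rewrite -size_filter -(size_map val) -(size_iota 1 (c - 1)).
apply: uniq_leq_size.
  by rewrite (map_inj_uniq val_inj); do 2!apply: filter_uniq; exact: enum_uniq.
move=> n /mapP[j]; rewrite !mem_filter mem_iota => /and3P[j_lt j_neq _] ->.
have j_gt0 : (0 < j)%N.
  by rewrite lt0n; apply: contraNneq j_neq => j_0; apply/eqP/val_inj; rewrite /= j_0 i0_0.
rewrite /=; lia.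
Qed.

End Indices.

Lemma le_sqrt_div (R : rcfType) (K X t : R) : 0 < K -> K * t ^+ 2 <= X ->
  t <= Num.sqrt (X / K).
Proof.
move=> K_gt0 KtX; have [t_le0|t_gt0] := lerP t 0.
  exact: le_trans t_le0 (sqrtr_ge0 _).
by rewrite -[leLHS]gtr0_norm // -sqrtr_sqr ler_wsqrtr // ler_pdivlMr // mulrC.
Qed.

Section KrumScores.
Variables (R : realType) (m c d : nat).
Variables (w : 'I_m -> 'rV[R]_d) (wRe s : 'rV[R]_d) (lam : R).
Let v := attacked_models c w wRe s lam.

Lemma krum_score_benign_le (i : 'I_m) : (c <= i)%N ->
  krum_score c v i <= benign_nbr_sum c w i.
Proof.
move=> c_le_i; rewrite /krum_score /benign_nbr_sum.
have -> : [seq edist (w l) (w i) ^+ 2 | l <- [seq l <- benign m c | l != i]] =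
    [seq edist (v i) (v l) ^+ 2 | l <- [seq l <- benign m c | l != i]].
  apply/eq_in_map => l; rewrite !mem_filter => /and3P[_ c_le_l _].
  by rewrite /v /attacked_models !ltnNge c_le_l c_le_i edistC.
apply: sum_smallest_subseq; first exact/map_subseq/benign_nbrs_subseq.
by rewrite size_map (leq_trans _ (size_benign_nbrs c i)) //; lia.
Qed.

Hypothesis s_sign : forall k : 'I_d, s 0 k = 1 \/ s 0 k = -1.

Lemma krum_score_crafted_ge (i0 : 'I_m) (t : R) :
  (0 < c)%N -> nat_of_ord i0 = 0%N -> 0 <= lam -> 0 <= t ->
  (forall j : 'I_m, (c <= j)%N -> t <= lam * Num.sqrt d%:R - edist (w j) wRe) ->
  (m - 2 * c - 1)%:R * t ^+ 2 <= krum_score c v i0.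
Proof.
move=> c_gt0 i0_0 lam_ge0 t_ge0 t_le.
(* Of the models other than [v i0], only its [c - 1] copies can be closer than [t]. *)
have -> : (m - 2 * c - 1 = m - c - 2 - (c - 1))%N by lia.
rewrite /krum_score; apply: sum_smallest_ge.
- exact: sqr_ge0.
- by apply/allP => _ /mapP[j _ ->]; exact: sqr_ge0.
- rewrite count_map; apply: leq_trans _ (count_crafted_nbrs c i0_0).
  apply: sub_count => j /=; apply: contraTT; rewrite -leqNgt -leNgt => c_le_j.
  rewrite /v /attacked_models i0_0 c_gt0 ltnNge c_le_j /=.
  apply: lerXn2r; rewrite ?nnegrE ?sqrtr_ge0 //.
  apply: le_trans (t_le j c_le_j) _.
  by rewrite -[lam in lam * _]ger0_norm //; exact: edist_shift_ge.
- rewrite size_map (leq_trans _ (size_subseq (benign_nbrs_subseq c i0))) //.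
  by apply: leq_trans (size_benign_nbrs c i0); lia.
Qed.

End KrumScores.

Theorem theorem1 (R : realType) (m c d : nat)
  (hm : (0 < m)%N) (hc : (0 < c)%N) (hd : (0 < d)%N) (hmc : (2 * c + 1 < m)%N)
  (w : 'I_m -> 'rV[R]_d) (wRe s : 'rV[R]_d)
  (hs : forall k : 'I_d, s 0 k = 1 \/ s 0 k = -1)
  (lam : R) (hsol : krum_opt_solution c w wRe s lam) :
  lam <=
    Num.sqrt ((((m - 2 * c - 1) * d)%:R)^-1 *
              seqmin [seq benign_nbr_sum c w i | i <- benign m c])
    + (Num.sqrt d%:R)^-1 * seqmax [seq edist (w i) wRe | i <- benign m c].
Proof.
have [[lam_gt0 krum_sel] _] := hsol.
set X := seqmin _; set M := seqmax _; set K := (m - 2 * c - 1)%N.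
have K_gt0 : (0 : R) < K%:R by rewrite ltr0n /K; lia.
have sqrt_d_gt0 : (0 : R) < Num.sqrt d%:R by rewrite sqrtr_gt0 ltr0n.
have [istar istar_benign X_eq] : exists2 i, i \in benign m c & X = benign_nbr_sum c w i.
  by apply/mapP/mem_seqmin; rewrite -size_eq0 size_map size_benign; lia.
have c_le_istar : (c <= istar)%N by move: istar_benign; rewrite mem_filter => /andP[].
have le_M (j : 'I_m) : (c <= j)%N -> edist (w j) wRe <= M.
  by move=> c_le_j; apply/le_seqmax/map_f; rewrite mem_filter c_le_j mem_enum.
have shifted_le : lam * Num.sqrt d%:R - M <= Num.sqrt (X / K%:R).
  have [t_le0|t_gt0] := lerP (lam * Num.sqrt d%:R - M) 0.
    exact: le_trans t_le0 (sqrtr_ge0 _).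
  apply: le_sqrt_div K_gt0 _; rewrite X_eq.
  apply: le_trans _ (krum_score_benign_le w wRe s lam c_le_istar).
  apply: le_trans (krum_sel (Ordinal hm) erefl istar).
  apply: krum_score_crafted_ge => //; [exact: ltW | exact: ltW |].
  by move=> j c_le_j; rewrite lerB // le_M.
rewrite natrM invfM -mulrA mulrCA sqrtrM ?invr_ge0 // sqrtrV // -mulrDr ler_pdivlMl //.
by rewrite [_^-1 * X]mulrC; lra.
Qed.
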